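(* Let $\rho\in(0,\frac\pi2)$, $k>0$, $\eta>0$. For all $\delta_\omega\in\mathbb R^N$ and all $\tilde\theta,\tilde\theta^*\in\mathbb S(\rho)$, setting $\delta_\theta:=\tilde\theta-\tilde\theta^*$, the function $$V:=\tfrac12\delta_\omega^TM\delta_\omega+k\big(U(\tilde\theta)-U(\tilde\theta^* )-\nabla U(\tilde\theta^* )^T(\tilde\theta-\tilde\theta^* )\big)+\eta\big(\nabla U(\tilde\theta)-\nabla U(\tilde\theta^* )\big)^TY^TM^{1/2}\delta_\omega$$ satisfies $$V\le\tfrac34\delta_\omega^TM\delta_\omega+\big(\tfrac12k\lambda_N+\eta^2\lambda_N^2\big)|\delta_\theta|^2,$$ $$V\ge\tfrac14\delta_\omega^TM\delta_\omega+\big(\tfrac12k\lambda_2\sin(\rho)-\eta^2\lambda_N^2\big)|\delta_\theta|^2,$$ where $\lambda_2$ and $\lambda_N$ are the second-smallest and largest eigenvalues of $M^{-1}L_B$.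
   Context: Let $(\mathcal N,\mathcal E)$ be a connected undirected graph, $\mathcal N=\{1,\dots,N\}$, $E=|\mathcal E|$, with edge weights $B^0_{ij}>0$. Fix an edge orientation, let $A\in\mathbb R^{N\times E}$ be the node-edge incidence matrix, $\Gamma=\mathrm{diag}(B^0_{ij},\{i,j\}\in\mathcal E)$ and $L_B=A\Gamma A^T$. Let $M=\mathrm{diag}(M_1,\dots,M_N)$ with $M_i>0$ and $Y\in\mathbb R^{N\times(N-1)}$ a matrix whose columns form an orthonormal basis of the null space of $\mathbb 1_N^TM^{1/2}$. Define $U(\tilde\theta):=-\mathbb 1_E^T\Gamma\cos(A^TM^{-1/2}Y\tilde\theta)$ for $\tilde\theta\in\mathbb R^{N-1}$ (cosine elementwise), with gradient $\nabla U(\tilde\theta)=Y^TM^{-1/2}A\Gamma\sin(A^TM^{-1/2}Y\tilde\theta)$. For $\rho\in(0,\frac\pi2)$, $\mathbb S(\rho):=\{\tilde\theta:\max_l|(A^TM^{-1/2}Y\tilde\theta)_l|<\frac\pi2-\rho\}$. $|\cdot|$ is the Euclidean norm. *)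

From HB Require Import structures.
From mathcomp Require Import all_boot all_order all_algebra.
From mathcomp Require Import reals trigo.
Set Implicit Arguments. Unset Strict Implicit. Unset Printing Implicit Defensive.
Import Order.TTheory GRing.Theory Num.Theory.
Local Open Scope ring_scope.

Section Defs.
Variable R : realType.
Variables (N E : nat).

(* A graph on nodes 'I_N with E edges, edge e oriented from tl e to hd e. *)
Definition incidence (tl hd : 'I_E -> 'I_N) : 'M[R]_(N, E) :=
  \matrix_(i < N, e < E) ((i == tl e)%:R - (i == hd e)%:R).

Definition simple_graph (tl hd : 'I_E -> 'I_N) : Prop :=
  (forall e, tl e != hd e) /\
  (forall e e', [set tl e; hd e] = [set tl e'; hd e'] -> e = e').

Definition adjacent (tl hd : 'I_E -> 'I_N) : rel 'I_N :=
  fun i j => [exists e, ((tl e == i) && (hd e == j)) || ((tl e == j) && (hd e == i))].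

Definition connected_graph (tl hd : 'I_E -> 'I_N) : Prop :=
  forall i j, connect (adjacent tl hd) i j.

Definition Gammamx (B0 : 'I_E -> R) : 'M[R]_E := diag_mx (\row_e B0 e).

Definition LB (tl hd : 'I_E -> 'I_N) (B0 : 'I_E -> R) : 'M[R]_N :=
  incidence tl hd *m Gammamx B0 *m (incidence tl hd)^T.

Definition Mmx (m : 'I_N -> R) : 'M[R]_N := diag_mx (\row_i m i).
Definition Msqrt (m : 'I_N -> R) : 'M[R]_N := diag_mx (\row_i Num.sqrt (m i)).
Definition Minvsqrt (m : 'I_N -> R) : 'M[R]_N := diag_mx (\row_i (Num.sqrt (m i))^-1).
Definition Minv (m : 'I_N -> R) : 'M[R]_N := diag_mx (\row_i (m i)^-1).

Definition Y_basis (m : 'I_N -> R) (Y : 'M[R]_(N, N.-1)) : Prop :=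
  Y^T *m Y = 1%:M /\
  (const_mx 1 : 'rV[R]_N) *m Msqrt m *m Y = 0 /\
  (forall v : 'cV[R]_N, (const_mx 1 : 'rV[R]_N) *m Msqrt m *m v = 0 ->
      exists c : 'cV[R]_(N.-1), v = Y *m c).

Definition phase (tl hd : 'I_E -> 'I_N) (m : 'I_N -> R) (Y : 'M[R]_(N, N.-1))
  (th : 'cV[R]_(N.-1)) : 'cV[R]_E :=
  (incidence tl hd)^T *m Minvsqrt m *m Y *m th.

Definition Upot tl hd (B0 : 'I_E -> R) m Y (th : 'cV[R]_(N.-1)) : R :=
  - \sum_(e < E) B0 e * cos (phase tl hd m Y th e 0).

Definition gradU tl hd (B0 : 'I_E -> R) m Y (th : 'cV[R]_(N.-1)) : 'cV[R]_(N.-1) :=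
  Y^T *m Minvsqrt m *m incidence tl hd *m Gammamx B0 *m
    map_mx (@sin R) (phase tl hd m Y th).

Definition Sset tl hd m Y (rho : R) (th : 'cV[R]_(N.-1)) : Prop :=
  forall l : 'I_E, `|phase tl hd m Y th l 0| < pi / 2 - rho.

Definition sorted_eigenvalues (A : 'M[R]_N) (s : seq R) : Prop :=
  sorted <=%R s /\ char_poly A = \prod_(x <- s) ('X - x%:P).

Definition sc (a : 'M[R]_1) : R := a 0 0.

Definition sqnorm n (v : 'cV[R]_n) : R := \sum_(i < n) v i 0 ^+ 2.

End Defs.

(* Write [phi = A^T M^{-1/2} Y theta] for the phase differences along the
   edges. Every term of V is controlled by the quadratic form
   [x |-> sum_e B0_e (phi x)_e^2] of [Y^T M^{-1/2} L_B M^{-1/2} Y], whose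
   Rayleigh quotient lies in [[lambda_2, lambda_N]]: its extreme values on the
   unit sphere (attained by compactness) are eigenvalues of [M^-1 L_B], and
   connectivity rules out the zero eigenvalue of the synchronous mode. The
   Bregman remainder of U is, edge by edge, a second-order Taylor remainder of
   [cos], whose second derivative lies in [[sin rho, 1]] on S(rho); the
   gradient difference is controlled by the 1-Lipschitz sine; and the cross
   term is split by Young's inequality together with Bessel's inequality for
   [Y^T]. *)

From Pilot Require Import Defs.
From HB Require Import structures.
From mathcomp Require Import all_boot all_order all_algebra.
From mathcomp Require Import reals trigo.
From mathcomp Require Import boolp classical_sets topology normedtype derive.
From mathcomp Require Import ring lra.
Import Order.TTheory GRing.Theory Num.Theory.
Import numFieldNormedType.Exports.
Local Open Scope classical_set_scope.
Local Open Scope ring_scope.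
Set Implicit Arguments. Unset Strict Implicit.

Section QuadraticForms.
Variable R : realType.
Implicit Types n : nat.

Definition qform n (S : 'M[R]_n) (x : 'cV[R]_n) : R := sc (x^T *m S *m x).

Lemma sc_mulmx n (u v : 'cV[R]_n) : sc (u^T *m v) = \sum_i u i 0 * v i 0.
Proof. by rewrite /sc mxE; apply: eq_bigr => i _; rewrite mxE. Qed.

Lemma scD (a b : 'M[R]_1) : sc (a + b) = sc a + sc b.
Proof. by rewrite /sc mxE. Qed.

Lemma scB (a b : 'M[R]_1) : sc (a - b) = sc a - sc b.
Proof. by rewrite /sc !mxE. Qed.

Lemma sqnormE n (v : 'cV[R]_n) : sqnorm v = sc (v^T *m v).
Proof. by rewrite sc_mulmx; apply: eq_bigr => i _; rewrite expr2. Qed.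

Lemma sqnorm_ge0 n (v : 'cV[R]_n) : 0 <= sqnorm v.
Proof. by apply: sumr_ge0 => i _; exact: sqr_ge0. Qed.

Lemma sqnorm_eq0 n (v : 'cV[R]_n) : sqnorm v = 0 -> v = 0.
Proof.
move=> /psumr_eq0P v0; apply/matrixP => i j; rewrite (ord1 j) mxE.
by apply/eqP; rewrite -sqrf_eq0 v0 // => k _; exact: sqr_ge0.
Qed.

Lemma sqnorm0 n : sqnorm (0 : 'cV[R]_n) = 0.
Proof. by rewrite /sqnorm big1 // => i _; rewrite mxE expr0n. Qed.

Lemma sqnormZ n (a : R) (x : 'cV[R]_n) : sqnorm (a *: x) = a ^+ 2 * sqnorm x.
Proof. by rewrite /sqnorm mulr_sumr; apply: eq_bigr => i _; rewrite mxE exprMn. Qed.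

Lemma qformE n (S : 'M[R]_n) x :
  qform S x = \sum_i \sum_j x i 0 * S i j * x j 0.
Proof.
rewrite /qform -mulmxA sc_mulmx; apply: eq_bigr => i _.
by rewrite mxE mulr_sumr; apply: eq_bigr => j _; rewrite mulrA.
Qed.

Lemma qformZ n (S : 'M[R]_n) (a : R) x : qform S (a *: x) = a ^+ 2 * qform S x.
Proof.
rewrite !qformE mulr_sumr; apply: eq_bigr => i _; rewrite mulr_sumr.
by apply: eq_bigr => j _; rewrite !mxE; ring.
Qed.

Lemma qformN n (S : 'M[R]_n) x : qform (- S) x = - qform S x.
Proof. by rewrite /qform mulmxN mulNmx /sc mxE. Qed.

Lemma qform_scalar_subr n (mu : R) (S : 'M[R]_n) x :
  qform (mu%:M - S) x = mu * sqnorm x - qform S x.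
Proof.
rewrite /qform mulmxBr mulmxBl mul_mx_scalar -scalemxAl sqnormE /sc.
by rewrite !mxE.
Qed.

Lemma qformD n (S : 'M[R]_n) x y : S^T = S ->
  qform S (x + y) = qform S x + 2 * sc (x^T *m S *m y) + qform S y.
Proof.
move=> Ssym; have yx : sc (y^T *m S *m x) = sc (x^T *m S *m y).
  have <- : (x^T *m S *m y)^T = y^T *m S *m x.
    by rewrite !trmx_mul trmxK Ssym mulmxA.
  by rewrite /sc mxE.
rewrite /qform mulmxDr [(x + y)^T]linearD /= !mulmxDl.
by rewrite !scD yx; ring.
Qed.

(* Otherwise the form would become negative at [x0 - t S x0] for small [t > 0]. *)
Lemma psd_qform_eq0 n (S : 'M[R]_n) x0 : S^T = S ->
  (forall x, 0 <= qform S x) -> qform S x0 = 0 -> S *m x0 = 0.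
Proof.
move=> Ssym psd Sx0; set r := S *m x0.
have x0Sr : sc (x0^T *m S *m r) = sqnorm r.
  by rewrite sqnormE /r trmx_mul Ssym !mulmxA.
set q := sqnorm r; set h := qform S r.
have h_ge0 : 0 <= h := psd r.
have q_ge0 : 0 <= q := sqnorm_ge0 r.
have := psd (x0 + (- q / (h + 1)) *: r).
rewrite qformD // Sx0 -scalemxAr /sc mxE -/(sc _) x0Sr qformZ -/q -/h.
have -> : 0 + 2 * (- q / (h + 1) * q) + (- q / (h + 1)) ^+ 2 * h
          = - (q ^+ 2 * (h + 2)) / (h + 1) ^+ 2.
  by field; rewrite gt_eqF //; lra.
rewrite pmulr_lge0 ?invr_gt0 ?exprn_gt0 ?oppr_ge0 //; last lra.
by move=> qq; apply: sqnorm_eq0; rewrite -/q; nra.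
Qed.

Lemma qform0 n (S : 'M[R]_n) : qform S 0 = 0.
Proof. by rewrite /qform mulmx0 /sc mxE. Qed.

Lemma sqnorm_qform1 n (x : 'cV[R]_n) : sqnorm x = qform 1%:M x.
Proof. by rewrite /qform mulmx1 sqnormE. Qed.

Lemma continuous_sum (T : topologicalType) (I : Type) (r : seq I)
    (F : I -> T -> R) :
  (forall i, continuous (F i)) -> continuous (fun x => \sum_(i <- r) F i x).
Proof.
move=> Fc; elim: r => [|a r IHr].
  by under eq_fun do rewrite big_nil; exact: cst_continuous.
under eq_fun do rewrite big_cons.
move=> x.
exact: (@continuousD _ _ _ (F a) (fun y => \sum_(i <- r) F i y) x (Fc a x) (IHr x)).
Qed.

Lemma continuous_qform_row n (S : 'M[R]_n) :
  continuous (fun v : 'rV[R]_n => qform S v^T).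
Proof.
have -> : (fun v : 'rV_n => qform S v^T) =
          (fun v => \sum_i \sum_j v 0 i * S i j * v 0 j).
  apply/funext => v; rewrite qformE; apply: eq_bigr => i _.
  by apply: eq_bigr => j _; rewrite !mxE.
apply: continuous_sum => i; apply: continuous_sum => j v.
have vi_cont k : {for v, continuous (fun w : 'rV[R]_n => w 0 k)}.
  exact: (@coord_continuous R 1 n 0 k v).
have Sij_cont := @cst_continuous _ _ (S i j) v.
exact: (continuousM (continuousM (vi_cont i) Sij_cont) (vi_cont j)).
Qed.

Lemma qform_sphere_max n (S : 'M[R]_n) : (0 < n)%N ->
  exists2 c, sqnorm c = 1 & forall v, sqnorm v = 1 -> qform S v <= qform S c.
Proof.
move=> n_gt0.
pose box := [set v : 'rV[R]_n | forall i, `[-1, 1]%classic (v ord0 i)].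
pose sphere := (fun v : 'rV[R]_n => sqnorm v^T) @^-1` [set 1].
have box_compact : compact box.
  exact: rV_compact (fun=> @segment_compact R (-1) 1).
have sphere_closed : closed sphere.
  apply: preimage_closed; last exact: closed_eq.
  move=> v _; under eq_fun do rewrite sqnorm_qform1.
  exact: continuous_qform_row.
have sphere_sub_box : sphere `<=` box.
  move=> v v1 i; rewrite /= in_itv /=; move: v1 => /= v1.
  have : v ord0 i ^+ 2 <= 1.
    rewrite -v1 /sqnorm (bigD1 i) //= mxE lerDl.
    by apply: sumr_ge0 => j _; exact: sqr_ge0.
  by move=> vi; apply/andP; split; nra.
have sphere_compact : compact sphere.
  by rewrite -(setIidr sphere_sub_box); exact: compact_closedI.
pose e0 : 'rV[R]_n := delta_mx 0 (Ordinal n_gt0).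
have e0_unit : sqnorm e0^T = 1.
  rewrite /sqnorm (bigD1 (Ordinal n_gt0)) //= big1 => [|i /negbTE i0].
    by rewrite !mxE !eqxx expr1n addr0.
  by rewrite !mxE i0 andbF expr0n.
have cont_on_sphere : {within sphere, continuous (fun v => qform S v^T)}.
  by apply: continuous_subspaceT; exact: continuous_qform_row.
have [c] := EVT_max_rV (ex_intro _ e0 e0_unit) sphere_compact cont_on_sphere.
rewrite inE => c1 cmax; exists c^T => // v v1.
by rewrite -(trmxK v); apply: cmax; rewrite inE /sphere /= trmxK.
Qed.

Lemma symmx_rayleigh_max n (S : 'M[R]_n) : (0 < n)%N -> S^T = S ->
  exists2 x, sqnorm x = 1 &
    S *m x = qform S x *: x /\ forall y, qform S y <= qform S x * sqnorm y.
Proof.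
move=> n_gt0 Ssym; have [c c1 cmax] := qform_sphere_max S n_gt0.
have rayleigh y : qform S y <= qform S c * sqnorm y.
  have [y0|y_neq0] := eqVneq (sqnorm y) 0.
    by rewrite y0 mulr0 (sqnorm_eq0 y0) qform0.
  have y_gt0 : 0 < sqnorm y by rewrite lt_def y_neq0 sqnorm_ge0.
  pose a := (Num.sqrt (sqnorm y))^-1.
  have a2y : a ^+ 2 * sqnorm y = 1.
    by rewrite exprVn sqr_sqrtr ?mulVf // ltW.
  have := cmax (a *: y); rewrite sqnormZ qformZ => /(_ a2y).
  move=> /(ler_wpM2r (sqnorm_ge0 y)); rewrite mulrAC a2y mul1r.
  by rewrite mulrC.
exists c => //; split=> //.
have psd : forall x, 0 <= qform ((qform S c)%:M - S) x.
  by move=> x; rewrite qform_scalar_subr subr_ge0.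
have : ((qform S c)%:M - S) *m c = 0.
  apply: psd_qform_eq0 => //; first by rewrite linearB /= tr_scalar_mx Ssym.
  by rewrite qform_scalar_subr c1 mulr1 subrr.
by rewrite mulmxBl mul_scalar_mx => /eqP; rewrite subr_eq0 => /eqP <-.
Qed.

Lemma symmx_rayleigh_min n (S : 'M[R]_n) : (0 < n)%N -> S^T = S ->
  exists2 x, sqnorm x = 1 &
    S *m x = qform S x *: x /\ forall y, qform S x * sqnorm y <= qform S y.
Proof.
move=> n_gt0 Ssym; have NSsym : (- S)^T = - S by rewrite linearN /= Ssym.
have [x x1 [Sx xmax]] := symmx_rayleigh_max n_gt0 NSsym.
exists x => //; split.
  by apply: oppr_inj; rewrite -mulNmx Sx qformN scaleNr.
by move=> y; have := xmax y; rewrite !qformN mulNr lerN2.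
Qed.

Lemma sc_tr (a : 'M[R]_1) : sc a^T = sc a.
Proof. by rewrite /sc mxE. Qed.

Lemma bessel_ineq n p (Y : 'M[R]_(n, p)) (z : 'cV[R]_n) :
  Y^T *m Y = 1%:M -> sqnorm (Y^T *m z) <= sqnorm z.
Proof.
move=> YY; set u := Y^T *m z.
have proj_sqnorm : sqnorm (z - Y *m u) = sqnorm z - sqnorm u.
  have zYu : sc (z^T *m (Y *m u)) = sqnorm u.
    by rewrite sqnormE /u trmx_mul trmxK mulmxA.
  have Yuz : sc ((Y *m u)^T *m z) = sqnorm u by rewrite -sc_tr trmx_mul trmxK zYu.
  have YuYu : sc ((Y *m u)^T *m (Y *m u)) = sqnorm u.
    by rewrite trmx_mul -mulmxA (mulmxA Y^T) YY mul1mx sqnormE.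
  rewrite [sqnorm (z - _)]sqnormE [(z - _)^T]linearB /= mulmxBl !mulmxBr.
  by rewrite !scB zYu Yuz YuYu -sqnormE; ring.
by have := sqnorm_ge0 (z - Y *m u); lra.
Qed.

Lemma sc_mulmx_young n (c : R) (u v : 'cV[R]_n) :
  `|c * sc (u^T *m v)| <= c ^+ 2 * sqnorm u + sqnorm v / 4.
Proof.
rewrite sc_mulmx mulr_sumr /sqnorm mulr_sumr mulr_suml -big_split /=.
apply: le_trans (ler_norm_sum _ _ _) _; apply: ler_sum => i _.
have := sqr_ge0 (c * u i 0 - v i 0 / 2); have := sqr_ge0 (c * u i 0 + v i 0 / 2).
by rewrite ler_norml => ? ?; apply/andP; split; nra.
Qed.

End QuadraticForms.

Section SortedEigenvalues.
Variable R : realType.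
Implicit Types s : seq R.

Lemma sorted_nth_le s i j : sorted <=%R s -> (i <= j < size s)%N -> s`_i <= s`_j.
Proof.
move=> s_sorted /andP[ij js].
by apply: (sorted_leq_nth le_trans lexx 0 s_sorted); rewrite // inE (leq_ltn_trans ij).
Qed.

Lemma sorted_mem_le_last s x : sorted <=%R s -> x \in s -> x <= s`_(size s).-1.
Proof.
move=> s_sorted xs; have ix : (index x s < size s)%N by rewrite index_mem.
have s_gt0 : (0 < size s)%N := leq_ltn_trans (leq0n _) ix.
rewrite -(nth_index 0 xs); apply: sorted_nth_le => //.
by rewrite -ltnS prednK // ix leqnn.
Qed.

Lemma sorted_mem_ge_head s x : sorted <=%R s -> x \in s -> s`_0 <= x.
Proof.
move=> s_sorted xs; rewrite -(nth_index 0 xs); apply: sorted_nth_le => //.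
by rewrite index_mem xs.
Qed.

Lemma sorted_mem_ge_second s x : sorted <=%R s -> x \in s -> s`_0 < x -> s`_1 <= x.
Proof.
move=> s_sorted xs; rewrite -(nth_index 0 xs).
case: (index x s) (index_mem x s) => [|j] /= => [_|jsize _]; first by rewrite ltxx.
by apply: sorted_nth_le => //; rewrite jsize xs.
Qed.

Lemma char_poly_trmx n (A : 'M[R]_n) : char_poly A^T = char_poly A.
Proof.
rewrite /char_poly -det_tr; congr (\det _); apply/matrixP => i j.
by rewrite !mxE eq_sym.
Qed.

Lemma eigenvalue_mem_sorted n (A : 'M[R]_n) s mu (v : 'cV[R]_n) :
  sorted_eigenvalues A s -> v != 0 -> A *m v = mu *: v -> mu \in s.
Proof.
move=> [_ charA] v_neq0 Av.
have : eigenvalue A^T mu.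
  apply/eigenvalueP; exists v^T; last by rewrite trmx_eq0.
  by rewrite -trmx_mul Av linearZ.
by rewrite eigenvalue_root_char char_poly_trmx charA root_prod_XsubC.
Qed.

End SortedEigenvalues.

Section CosineTaylor.
Variable R : realType.
Implicit Types a b c z : R.

Definition between a b z := a <= z <= b \/ b <= z <= a.

Lemma between_norm_lt a b z (r : R) :
  between a b z -> `|a| < r -> `|b| < r -> `|z| < r.
Proof.
rewrite !ltr_norml => zab /andP[? ?] /andP[? ?].
by case: zab => /andP[? ?]; apply/andP; split; lra.
Qed.

Lemma MVT_between (f df : R -> R) : (forall x, is_derive x (1 : R) f (df x)) ->
  forall a b, exists2 c, between a b c & f b - f a = df c * (b - a).
Proof.
move=> f_df a b.
have f_cont u v : {within `[u, v], continuous f}.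
  by apply: derivable_within_continuous => x _; exact: ex_derive.
have [ab|ba] := leP a b.
  have [c] := MVT_segment ab (fun x _ => f_df x) (f_cont a b).
  by rewrite in_itv /= => cab; exists c => //; left.
have [c] := MVT_segment (ltW ba) (fun x _ => f_df x) (f_cont b a).
rewrite in_itv /= => cba fE; exists c; first by right.
by rewrite -opprB fE -mulrN opprB.
Qed.

(* Taylor expansion of [cos] at [b] to second order, with [c] subtracted from
   the second derivative; obtained by two mean value steps. *)
Lemma cos_bregman_taylor c a b : exists2 z, between a b z &
  exists2 t, 0 <= t &
    cos b - cos a - sin b * (a - b) - c / 2 * (a - b) ^+ 2 = (cos z - c) * t.
Proof.
pose F t := cos b - cos t - sin b * (t - b) - c / 2 * (t - b) ^+ 2.
have F_deriv t : is_derive t (1 : R) F (sin t - sin b - c * (t - b)).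
  apply: is_derive_eq; rewrite [in RHS]mulrC /GRing.scale /=; lra.
have sin_deriv t : is_derive t (1 : R) (@sin R) (cos t) by exact: is_derive_sin.
have [xi xi_ba FE] := MVT_between F_deriv b a.
have [z z_bxi sinE] := MVT_between sin_deriv b xi.
have Fb : F b = 0 by rewrite /F; ring.
exists z.
  case: xi_ba => /andP[? ?]; case: z_bxi => /andP[? ?];
  by case: (leP a b) => ?; [left | right]; apply/andP; split; lra.
exists ((xi - b) * (a - b)); first by case: xi_ba => /andP[? ?]; nra.
by move: FE; rewrite Fb subr0 /F => ->; rewrite sinE; ring.
Qed.

Lemma cos_bregman_ge c a b : (forall z, between a b z -> c <= cos z) ->
  c / 2 * (a - b) ^+ 2 <= cos b - cos a - sin b * (a - b).
Proof.
move=> c_le; have [z zab [t t_ge0 E]] := cos_bregman_taylor c a b.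
have : 0 <= (cos z - c) * t by rewrite mulr_ge0 // subr_ge0 c_le.
lra.
Qed.

Lemma cos_bregman_le a b : cos b - cos a - sin b * (a - b) <= (a - b) ^+ 2 / 2.
Proof.
have [z _ [t t_ge0 E]] := cos_bregman_taylor 1 a b.
have : (cos z - 1) * t <= 0 by rewrite mulr_le0_ge0 // subr_le0 cos_le1.
lra.
Qed.

Lemma sin_sub_sqr_le a b : (sin a - sin b) ^+ 2 <= (a - b) ^+ 2.
Proof.
have sin_deriv t : is_derive t (1 : R) (@sin R) (cos t) by exact: is_derive_sin.
have [z _ ->] := MVT_between sin_deriv b a.
rewrite exprMn ler_piMl ?sqr_ge0 //.
by have := cos_le1 z; have := cos_geN1 z; nra.
Qed.

Lemma sin_le_cos (rho z : R) : - (pi / 2) <= rho -> `|z| < pi / 2 - rho ->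
  sin rho <= cos z.
Proof.
move=> rho_ge zlt; rewrite -cos_norm -cosBpihalf -cosN opprB.
have pi_gt0 := pi_gt0 R; have z_ge0 := normr_ge0 z.
apply/ltW; rewrite ltr_cos ?in_itv /= ?normr_ge0 //; apply/andP; split; lra.
Qed.

End CosineTaylor.

Section SwingNetwork.
Variables (R : realType) (N E : nat) (tl hd : 'I_E -> 'I_N).
Variables (B0 : 'I_E -> R) (m : 'I_N -> R) (Y : 'M[R]_(N, N.-1)).
Hypotheses (B0_gt0 : forall e, 0 < B0 e) (m_gt0 : forall i, 0 < m i).
Hypothesis Y_orthobasis : Y_basis m Y.

Local Notation A := (incidence R tl hd).
Local Notation LB := (LB tl hd B0).
Local Notation U := (Upot tl hd B0 m Y).
Local Notation gradU := (gradU tl hd B0 m Y).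
Local Notation phi := (phase tl hd m Y).

Lemma incidence_tr_mulE (w : 'cV[R]_N) e :
  (A^T *m w) e 0 = w (tl e) 0 - w (hd e) 0.
Proof.
rewrite mxE; under eq_bigr do rewrite !mxE mulrBl !mulr_natl !mulrb.
by rewrite sumrB -!big_mkcond !big_pred1_eq.
Qed.

Lemma incidence_tr_const1 : A^T *m (const_mx 1 : 'cV[R]_N) = 0.
Proof. by apply/matrixP => e j; rewrite (ord1 j) incidence_tr_mulE !mxE subrr. Qed.

Lemma const1_incidence : (const_mx 1 : 'rV[R]_N) *m A = 0.
Proof.
by apply: trmx_inj; rewrite trmx_mul trmx_const incidence_tr_const1 trmx0.
Qed.

Lemma LB_mul_const1 : LB *m (const_mx 1 : 'cV[R]_N) = 0.
Proof. by rewrite /Defs.LB -mulmxA incidence_tr_const1 mulmx0. Qed.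

Lemma connected_edge_const (T : Type) (f : 'I_N -> T) :
  connected_graph tl hd -> (forall e, f (tl e) = f (hd e)) -> forall i j, f i = f j.
Proof.
move=> conn f_edge i j; have /connectP[p p_path ->] := conn i j.
elim: p i p_path => [|k p IHp] i //= /andP[/existsP[e ik] p_path].
rewrite -(IHp k p_path).
by case/orP: ik => /andP[/eqP <- /eqP <-].
Qed.

Lemma Msqrt_Minvsqrt : Msqrt m *m Minvsqrt m = 1%:M.
Proof.
rewrite /Msqrt /Minvsqrt mulmx_diag; apply/matrixP => i j; rewrite !mxE.
by case: eqP => [->|_]; rewrite ?mulr1n ?mulr0n // divff // gt_eqF ?sqrtr_gt0.
Qed.

Lemma Minvsqrt_sqr : Minvsqrt m *m Minvsqrt m = Minv m.
Proof.
rewrite /Minv /Minvsqrt mulmx_diag; congr diag_mx; apply/rowP => i.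
by rewrite !mxE -invfM -expr2 sqr_sqrtr // ltW.
Qed.

Lemma mass_formE (dw : 'cV[R]_N) : sc (dw^T *m Mmx m *m dw) = sqnorm (Msqrt m *m dw).
Proof.
rewrite -mulmxA sc_mulmx /sqnorm; apply: eq_bigr => i _.
rewrite /Mmx /Msqrt !mul_diag_mx !mxE exprMn sqr_sqrtr ?(ltW (m_gt0 i)) //.
by rewrite mulrCA expr2.
Qed.

Definition phasemx : 'M[R]_(E, N.-1) := A^T *m Minvsqrt m *m Y.

(* [Lred = Y^T M^{-1/2} L_B M^{-1/2} Y]; its eigenvalues are those of
   [M^-1 L_B] except the zero eigenvalue of the synchronous mode. *)
Definition Lred : 'M[R]_(N.-1) := phasemx^T *m Gammamx B0 *m phasemx.

Lemma Gammamx_mulE (v : 'cV[R]_E) e : (Gammamx B0 *m v) e 0 = B0 e * v e 0.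
Proof. by rewrite /Gammamx mul_diag_mx !mxE. Qed.

Lemma Lred_sym : Lred^T = Lred.
Proof.
rewrite /Lred (trmx_mul (phasemx^T *m _)) (trmx_mul phasemx^T) trmxK.
by rewrite /Gammamx tr_diag_mx mulmxA.
Qed.

Lemma qform_LredE x : qform Lred x = \sum_e B0 e * phi x e 0 ^+ 2.
Proof.
have -> : qform Lred x = sc ((phasemx *m x)^T *m (Gammamx B0 *m (phasemx *m x))).
  by rewrite /qform /Lred (trmx_mul phasemx) !mulmxA.
by rewrite sc_mulmx; apply: eq_bigr => e _; rewrite Gammamx_mulE mulrCA -expr2.
Qed.

Lemma qform_Lred_ge0 x : 0 <= qform Lred x.
Proof.
by rewrite qform_LredE; apply: sumr_ge0 => e _; rewrite mulr_ge0 ?sqr_ge0 ?ltW.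
Qed.

Lemma Minvsqrt_Y_neq0 (x : 'cV[R]_(N.-1)) : x != 0 -> Minvsqrt m *m (Y *m x) != 0.
Proof.
move=> x_neq0; apply: contraNneq x_neq0 => lift0.
have Yx0 : Y *m x = 0.
  by rewrite -[Y *m x]mul1mx -Msqrt_Minvsqrt -mulmxA lift0 mulmx0.
by rewrite -[x]mul1mx -Y_orthobasis.1 -mulmxA Yx0 mulmx0.
Qed.

(* The null space of [1^T M^{1/2}] is the range of [Y], so [Y Y^T] fixes it. *)
Lemma Lred_eigen_lift mu (x : 'cV[R]_(N.-1)) : Lred *m x = mu *: x ->
  (Minv m *m LB) *m (Minvsqrt m *m (Y *m x)) = mu *: (Minvsqrt m *m (Y *m x)).
Proof.
move=> Lx; case: Y_orthobasis => YY [_ Yker].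
set z := Minvsqrt m *m A *m (Gammamx B0 *m (phasemx *m x)).
have -> : (Minv m *m LB) *m (Minvsqrt m *m (Y *m x)) = Minvsqrt m *m z.
  by rewrite -Minvsqrt_sqr /Defs.LB /z /phasemx !mulmxA.
have z_ker : (const_mx 1 : 'rV[R]_N) *m Msqrt m *m z = 0.
  rewrite /z !mulmxA -(mulmxA _ (Msqrt m)) Msqrt_Minvsqrt mulmx1.
  by rewrite const1_incidence !mul0mx.
have [c zE] := Yker z z_ker.
have YYz : Y *m (Y^T *m z) = z by rewrite zE (mulmxA Y^T) YY mul1mx.
have YtzE : Y^T *m z = Lred *m x.
  by rewrite /z /Lred /phasemx !trmx_mul trmxK /Minvsqrt tr_diag_mx !mulmxA.
by rewrite -YYz YtzE Lx -!scalemxAr.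
Qed.

(* The phases [w = M^{-1/2} Y x] then agree along every edge, hence are
   constant; being [M]-orthogonal to the constants, they vanish. *)
Lemma qform_Lred_eq0 x : connected_graph tl hd -> qform Lred x = 0 -> x = 0.
Proof.
move=> conn; rewrite qform_LredE => /psumr_eq0P phase0.
have {}phase0 e : B0 e * phi x e 0 ^+ 2 = 0.
  by apply: phase0 => // e' _; rewrite mulr_ge0 ?sqr_ge0 ?ltW.
set w := Minvsqrt m *m (Y *m x).
have w_edge e : w (tl e) 0 = w (hd e) 0.
  apply/eqP; rewrite -subr_eq0 -incidence_tr_mulE /w !mulmxA -/phasemx.
  have /eqP := phase0 e.
  by rewrite mulf_eq0 gt_eqF //= sqrf_eq0.
have w_const := connected_edge_const (f := fun i => w i 0) conn w_edge.
have Yx : Y *m x = Msqrt m *m w by rewrite /w mulmxA Msqrt_Minvsqrt mul1mx.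
have mw0 : \sum_i m i * w i 0 = 0.
  have : (const_mx 1 : 'rV[R]_N) *m Msqrt m *m (Msqrt m *m w) = 0.
    by rewrite -Yx mulmxA Y_orthobasis.2.1 mul0mx.
  move/matrixP/(_ 0 0); rewrite /Msqrt mul_mx_diag mul_diag_mx !mxE => h.
  rewrite -[RHS]h; apply: eq_bigr => i _; rewrite !mxE mul1r mulrA -expr2.
  by rewrite sqr_sqrtr // ltW.
have w0 : w = 0.
  apply/matrixP => i j; rewrite (ord1 j) [RHS]mxE.
  move: mw0; under eq_bigr do rewrite (w_const _ i).
  rewrite -mulr_suml => /eqP; rewrite mulf_eq0 => /orP[/eqP|/eqP //].
  move/psumr_eq0P => /(_ (fun k _ => ltW (m_gt0 k)) i isT) /eqP.
  by rewrite gt_eqF.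
by have [//|/Minvsqrt_Y_neq0] := eqVneq x 0; rewrite -/w w0 eqxx.
Qed.

Lemma Lred_spectral_bounds s : (1 < N)%N -> connected_graph tl hd ->
  sorted_eigenvalues (Minv m *m LB) s ->
  0 < s`_N.-1 /\
  forall x, s`_1 * sqnorm x <= qform Lred x <= s`_N.-1 * sqnorm x.
Proof.
move=> N_gt1 conn s_eig; have s_sorted := s_eig.1.
have N_gt0 : (0 < N)%N by apply: ltn_trans N_gt1.
have N1_gt0 : (0 < N.-1)%N by rewrite -ltnS prednK.
have size_s : size s = N.
  have := size_char_poly (Minv m *m LB); rewrite s_eig.2 size_prod_XsubC.
  by case.
have zero_in_s : 0 \in s.
  apply: (eigenvalue_mem_sorted s_eig (v := const_mx 1)).
    by apply/eqP => /matrixP/(_ (Ordinal N_gt0) 0)/eqP; rewrite !mxE oner_eq0.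
  by rewrite -mulmxA LB_mul_const1 mulmx0 scale0r.
have unit_neq0 (x : 'cV[R]_(N.-1)) : sqnorm x = 1 -> x != 0.
  move=> x1; apply/eqP => x0; move: x1.
  by rewrite x0 sqnorm0 => /eqP; rewrite eq_sym oner_eq0.
have eigen_in_s x :
    sqnorm x = 1 -> Lred *m x = qform Lred x *: x -> qform Lred x \in s.
  move=> x1 Lx; apply: eigenvalue_mem_sorted s_eig (Minvsqrt_Y_neq0 (unit_neq0 x x1)) _.
  exact: Lred_eigen_lift.
have [x1 x1_unit [Lx1 x1_max]] := symmx_rayleigh_max N1_gt0 Lred_sym.
have [x2 x2_unit [Lx2 x2_min]] := symmx_rayleigh_min N1_gt0 Lred_sym.
have lamN_ge : qform Lred x1 <= s`_N.-1.
  have := sorted_mem_le_last s_sorted (eigen_in_s x1 x1_unit Lx1).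
  by rewrite size_s.
have q2_gt0 : 0 < qform Lred x2.
  rewrite lt_def qform_Lred_ge0 andbT; apply: contra_neq (unit_neq0 x2 x2_unit).
  exact: qform_Lred_eq0.
have lam2_le : s`_1 <= qform Lred x2.
  apply: sorted_mem_ge_second => //; first exact: eigen_in_s.
  exact: le_lt_trans (sorted_mem_ge_head s_sorted zero_in_s) q2_gt0.
split.
  have := x1_max x2; rewrite x2_unit mulr1 => q21.
  exact: lt_le_trans q2_gt0 (le_trans q21 lamN_ge).
move=> x; apply/andP; split.
  exact: le_trans (ler_wpM2r (sqnorm_ge0 x) lam2_le) (x2_min x).
exact: le_trans (x1_max x) (ler_wpM2r (sqnorm_ge0 x) lamN_ge).
Qed.

Lemma gradUE th : gradU th = phasemx^T *m (Gammamx B0 *m map_mx sin (phi th)).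
Proof.
by rewrite /Defs.gradU /phasemx !trmx_mul trmxK /Minvsqrt tr_diag_mx !mulmxA.
Qed.

Lemma phaseB th ths e : phi (th - ths) e 0 = phi th e 0 - phi ths e 0.
Proof. by rewrite /phase mulmxBr !mxE. Qed.

Lemma Upot_bregmanE th ths :
  U th - U ths - sc ((gradU ths)^T *m (th - ths)) =
  \sum_e B0 e * (cos (phi ths e 0) - cos (phi th e 0)
                 - sin (phi ths e 0) * (phi th e 0 - phi ths e 0)).
Proof.
rewrite gradUE trmx_mul trmxK -mulmxA sc_mulmx /Upot.
rewrite -!sumrN -!big_split /=; apply: eq_bigr => e _.
by rewrite Gammamx_mulE [map_mx _ _ _ _]mxE (phaseB th ths e); ring.
Qed.

Lemma Upot_bregman_le th ths :
  U th - U ths - sc ((gradU ths)^T *m (th - ths)) <= qform Lred (th - ths) / 2.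
Proof.
rewrite Upot_bregmanE qform_LredE mulr_suml; apply: ler_sum => e _.
by rewrite -mulrA ler_pM2l // phaseB cos_bregman_le.
Qed.

Lemma Upot_bregman_ge rho th ths : - (pi / 2) <= rho ->
  Sset tl hd m Y rho th -> Sset tl hd m Y rho ths ->
  sin rho / 2 * qform Lred (th - ths) <=
  U th - U ths - sc ((gradU ths)^T *m (th - ths)).
Proof.
move=> rho_ge th_S ths_S.
rewrite Upot_bregmanE qform_LredE mulr_sumr; apply: ler_sum => e _.
rewrite mulrCA ler_pM2l // phaseB; apply: cos_bregman_ge => z z_btw.
exact/sin_le_cos/(between_norm_lt z_btw).
Qed.

Lemma gradU_subE th ths : gradU th - gradU ths =
  phasemx^T *m \col_e (B0 e * (sin (phi th e 0) - sin (phi ths e 0))).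
Proof.
rewrite !gradUE -mulmxBr; congr (_ *m _); apply/matrixP => e j.
by rewrite (ord1 j) -mulmxBr Gammamx_mulE !mxE.
Qed.

Lemma gradU_sub_sqnorm_le lam th ths : 0 < lam ->
  (forall x, qform Lred x <= lam * sqnorm x) ->
  sqnorm (gradU th - gradU ths) <= lam ^+ 2 * sqnorm (th - ths).
Proof.
move=> lam_gt0 Lred_le; set g := gradU th - gradU ths.
have gE : sqnorm g = \sum_e B0 e * (sin (phi th e 0) - sin (phi ths e 0)) * phi g e 0.
  rewrite sqnormE {1}/g gradU_subE trmx_mul trmxK -mulmxA sc_mulmx.
  by apply: eq_bigr => e _; rewrite mxE.
have sum_le : 2 * sqnorm g <= qform Lred g / lam + lam * qform Lred (th - ths).
  rewrite gE !qform_LredE mulr_suml mulr_sumr mulr_sumr -big_split /=.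
  apply: ler_sum => e _; rewrite (phaseB th ths).
  set d := sin (phi th e 0) - sin (phi ths e 0).
  set a := phi th e 0 - phi ths e 0; set u := phi g e 0.
  have d_le : d ^+ 2 <= a ^+ 2 by exact: sin_sub_sqr_le.
  have key : 2 * (d * u) <= u ^+ 2 / lam + lam * a ^+ 2.
    have : 0 <= (u - lam * d) ^+ 2 / lam by rewrite divr_ge0 ?sqr_ge0 ?ltW.
    have -> : (u - lam * d) ^+ 2 / lam = u ^+ 2 / lam - 2 * (d * u) + lam * d ^+ 2.
      by field; rewrite gt_eqF.
    have := ler_wpM2l (ltW lam_gt0) d_le; lra.
  have := ler_wpM2l (ltW (B0_gt0 e)) key; lra.
have g_le : qform Lred g / lam <= sqnorm g by rewrite ler_pdivrMr // mulrC.
have := ler_wpM2l (ltW lam_gt0) (Lred_le (th - ths)); lra.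
Qed.
End SwingNetwork.

Theorem lemmaD3 (R : realType) (N E : nat) (hN : (1 < N)%N)
  (tl hd : 'I_E -> 'I_N) (B0 : 'I_E -> R) (m : 'I_N -> R)
  (Y : 'M[R]_(N, N.-1)) (s : seq R)
  (hsimple : simple_graph tl hd) (hconn : connected_graph tl hd)
  (hB0 : forall e, 0 < B0 e) (hm : forall i, 0 < m i)
  (hY : Y_basis m Y)
  (hs : sorted_eigenvalues (Minv m *m LB tl hd B0) s)
  (rho k eta : R) (hrho0 : 0 < rho) (hrho1 : rho < pi / 2)
  (hk : 0 < k) (heta : 0 < eta)
  (dw : 'cV[R]_N) (th ths : 'cV[R]_(N.-1))
  (hth : Sset tl hd m Y rho th) (hths : Sset tl hd m Y rho ths) :
  let lam2 := s`_1 in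
  let lamN := s`_N.-1 in
  let dth := th - ths in
  let V := 2^-1 * sc (dw^T *m Mmx m *m dw)
         + k * (Upot tl hd B0 m Y th - Upot tl hd B0 m Y ths
                - sc ((gradU tl hd B0 m Y ths)^T *m dth))
         + eta * sc ((gradU tl hd B0 m Y th - gradU tl hd B0 m Y ths)^T
                      *m Y^T *m Msqrt m *m dw) in
  V <= 3 / 4 * sc (dw^T *m Mmx m *m dw)
       + (2^-1 * k * lamN + eta ^+ 2 * lamN ^+ 2) * sqnorm dth /\
  4^-1 * sc (dw^T *m Mmx m *m dw)
       + (2^-1 * k * lam2 * sin rho - eta ^+ 2 * lamN ^+ 2) * sqnorm dth <= V.
Proof.
move=> lam2 lamN dth V; rewrite {}/V {}/dth {}/lamN {}/lam2.
have [lamN_gt0 Lred_bounds] := Lred_spectral_bounds hB0 hm hY hN hconn hs.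
have [Lred_ge Lred_le] := andP (Lred_bounds (th - ths)).
set g := gradU tl hd B0 m Y th - gradU tl hd B0 m Y ths.
set w := Y^T *m (Msqrt m *m dw).
have -> : sc (g^T *m Y^T *m Msqrt m *m dw) = sc (g^T *m w) by rewrite /w !mulmxA.
have w_le : sqnorm w <= sc (dw^T *m Mmx m *m dw).
  by rewrite mass_formE //; exact: bessel_ineq hY.1.
have := sc_mulmx_young eta g w; rewrite ler_norml => /andP[cross_ge cross_le].
have g_le : sqnorm g <= s`_N.-1 ^+ 2 * sqnorm (th - ths).
  by apply: gradU_sub_sqnorm_le => // x; have /andP[] := Lred_bounds x.
have bregman_le := Upot_bregman_le tl hd m Y hB0 th ths.
have rho_ge : - (pi / 2) <= rho by have := pi_gt0 R; lra.
have bregman_ge := Upot_bregman_ge hB0 rho_ge hth hths.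
have sin_rho_ge0 : 0 <= sin rho.
  by apply/ltW/sin_gt0_pihalf; rewrite hrho0 hrho1.
set D := sc (dw^T *m Mmx m *m dw) in w_le *.
set Br := Upot tl hd B0 m Y th - _ - _ in bregman_le bregman_ge *.
have kBr_le : k * Br <= k * (s`_N.-1 * sqnorm (th - ths) / 2).
  by rewrite ler_pM2l //; apply: le_trans bregman_le _; lra.
have kBr_ge : k * (sin rho / 2 * (s`_1 * sqnorm (th - ths))) <= k * Br.
  rewrite ler_pM2l //; apply: le_trans _ bregman_ge.
  by rewrite ler_wpM2l // divr_ge0.
have := ler_wpM2l (sqr_ge0 eta) g_le.
split; lra.
Qed.
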